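(* Let $p\ge2$ and let $\epsilon>0$ be sufficiently small. For $\chi\in[0,\pi]$, $\psi\in[-\pi/2,\pi/2]$ set $A_0=e^{i\chi\sigma_z}$, $a_0=i\sigma_x\cos\psi+i\sigma_z\sin\psi$ and $$Q_p(\chi,\psi)=\big[(\,A_0,\ A_0^{-1}a_0A_0^{p+1},\ A_0^{-1}a_0A_0,\ a_0^{-1}\,)\big]\in R(T^2,2).$$ If $Q_p(\chi,\psi)=L_s(\phi,\theta)$ for some spherical-polar coordinates $(\phi,\theta)$, then $\phi=\pi/2$ and there is $n\in\{0,1,\dots,p-1\}$ with $$\chi=(n+\tfrac12)\tfrac{\pi}{p},\qquad \psi=(-1)^{n+1}\big(\tfrac{\pi}{2}-\epsilon\big).$$
   Context: Pauli matrices standard; $[A,B]=ABA^{-1}B^{-1}$. $R(T^2,2)$ is the space of tuples $(A,B,a,b)\in SU(2)^4$ with $\operatorname{tr}a=\operatorname{tr}b=0$ and $[A,B]ab=1$ modulo simultaneous conjugation (the tuple defining $Q_p$ satisfies these conditions). For $\nu=\epsilon\sin\phi$, $L_s(\phi,\theta)=[(A,B,a,b)]$ with $a=i\sigma_z$, $h=(\cos^2\nu+\sin^2\nu\sin^2\theta)^{-1/2}(i\sigma_x\cos\nu-i\sigma_z\sin\nu\sin\theta)$, $A=h(\cos\phi+i\sin\phi(\sigma_x\cos\theta+\sigma_y\sin\theta))$, $B=\cos\nu+i\sin\nu(\sigma_x\cos\theta+\sigma_y\sin\theta)$, $b=-ha^{-1}h^{-1}$. ($Q_p(\chi,\psi)$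 is the image of the disk Lagrangian point $[(e^{i\chi\sigma_z},1,a_0,a_0^{-1})]$ under the mapping class $\alpha_1^{-1}T_a^p$ that produces the simple knot in $L(p,1)$ representing $1\in H_1(L(p,1);\mathbb{Z})$.) *)

From Stdlib Require Import Reals.
Open Scope R_scope.

(* An element of the real span of {1, i sigma_x, i sigma_y, i sigma_z}
   (Pauli matrices standard), encoded by its four real coordinates:
   q = q0 * 1 + q1 * (i sigma_x) + q2 * (i sigma_y) + q3 * (i sigma_z).
   SU(2) is exactly the set of such q with q0^2+q1^2+q2^2+q3^2 = 1. *)
Record M2 := mkM2 { c0 : R; cx : R; cy : R; cz : R }.

(* Matrix product, using (i s_a)(i s_b) = - delta_ab 1 - eps_abc (i s_c). *)
Definition mmul (p q : M2) : M2 :=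
  mkM2 (c0 p * c0 q - cx p * cx q - cy p * cy q - cz p * cz q)
       (c0 p * cx q + cx p * c0 q - (cy p * cz q - cz p * cy q))
       (c0 p * cy q + cy p * c0 q - (cz p * cx q - cx p * cz q))
       (c0 p * cz q + cz p * c0 q - (cx p * cy q - cy p * cx q)).

Definition mone : M2 := mkM2 1 0 0 0.
Definition isx : M2 := mkM2 0 1 0 0.
Definition isy : M2 := mkM2 0 0 1 0.
Definition isz : M2 := mkM2 0 0 0 1.

Definition madd (p q : M2) : M2 :=
  mkM2 (c0 p + c0 q) (cx p + cx q) (cy p + cy q) (cz p + cz q).
Definition mscal (r : R) (q : M2) : M2 :=
  mkM2 (r * c0 q) (r * cx q) (r * cy q) (r * cz q).
Definition mopp (q : M2) : M2 := mscal (-1) q.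

Definition mdet (q : M2) : R := c0 q ^ 2 + cx q ^ 2 + cy q ^ 2 + cz q ^ 2.
Definition mtr (q : M2) : R := 2 * c0 q.
Definition minv (q : M2) : M2 :=
  mscal (/ mdet q) (mkM2 (c0 q) (- cx q) (- cy q) (- cz q)).

Fixpoint mpow (q : M2) (n : nat) : M2 :=
  match n with O => mone | S k => mmul q (mpow q k) end.

Definition inSU2 (q : M2) : Prop := mdet q = 1.

Definition comm (A B : M2) : M2 := mmul (mmul (mmul A B) (minv A)) (minv B).

Definition tuple4 : Type := (M2 * M2 * M2 * M2)%type.

Definition conj (g x : M2) : M2 := mmul (mmul g x) (minv g).

(* equality of points of R(T^2,2): equality up to simultaneous conjugation
   by an element of SU(2) *)
Definition Req (t u : tuple4) : Prop :=
  let '(A, B, a, b) := t in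
  let '(A', B', a', b') := u in
  exists g : M2, inSU2 g /\
    conj g A = A' /\ conj g B = B' /\ conj g a = a' /\ conj g b = b'.

Definition A0 (chi : R) : M2 := madd (mscal (cos chi) mone) (mscal (sin chi) isz).
Definition a0 (psi : R) : M2 := madd (mscal (cos psi) isx) (mscal (sin psi) isz).
Definition Qp (p : nat) (chi psi : R) : tuple4 :=
  (A0 chi,
   mmul (mmul (minv (A0 chi)) (a0 psi)) (mpow (A0 chi) (p + 1)),
   mmul (mmul (minv (A0 chi)) (a0 psi)) (A0 chi),
   minv (a0 psi)).

Definition Ls (eps phi theta : R) : tuple4 :=
  let nu := eps * sin phi in
  let a := isz in
  let h := mscal (/ sqrt (cos nu ^ 2 + sin nu ^ 2 * sin theta ^ 2))
             (madd (mscal (cos nu) isx) (mscal (- (sin nu * sin theta)) isz)) in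
  let u := madd (mscal (cos theta) isx) (mscal (sin theta) isy) in
  let A := mmul h (madd (mscal (cos phi) mone) (mscal (sin phi) u)) in
  let B := madd (mscal (cos nu) mone) (mscal (sin nu) u) in
  let b := mopp (mmul (mmul h (minv a)) (minv h)) in
  (A, B, a, b).

(* Both sides are tuples (A, B, a, b) of quaternions, equal up to simultaneous
   conjugation, so we compare quantities that conjugation preserves:
   - the relation  A a = - b A , which holds identically on Q_p; on L_s it
     reduces (after cancelling the normalising factor h) to  w a = a^-1 w
     with w = cos phi + sin phi u, u horizontal, and hence to cos phi = 0;
   - the real parts (half traces) of A, B and a b.  On Q_p these are
     cos chi, -sin(p chi) sin psi and 1 - 2 sin^2 chi cos^2 psi; on the
     equator of L_s they are -k cos eps cos theta, cos eps and
     k^2 (cos^2 eps - sin^2 eps sin^2 theta), k the normalisation of h.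
   Eliminating theta and k gives cos^2 psi = sin^2 eps and then
   sin^2 (p chi) = 1, which pins down chi and, through the sign of
   sin(p chi), the sign of psi. *)

From Stdlib Require Import Reals Lra Lia Psatz ZArith.
Open Scope R_scope.

Lemma M2_ext (p q : M2) :
  c0 p = c0 q -> cx p = cx q -> cy p = cy q -> cz p = cz q -> p = q.
Proof. destruct p, q; simpl; intros; subst; reflexivity. Qed.

Lemma mmul_assoc (x y z : M2) : mmul x (mmul y z) = mmul (mmul x y) z.
Proof. destruct x, y, z; apply M2_ext; simpl; ring. Qed.

Lemma mmul_1_l (q : M2) : mmul mone q = q.
Proof. destruct q; apply M2_ext; simpl; ring. Qed.

Lemma mmul_minv_l (q : M2) : mdet q <> 0 -> mmul (minv q) q = mone.
Proof.
  destruct q as [q0 q1 q2 q3]; unfold minv, mscal, mdet; simpl; intro Hq.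
  apply M2_ext; simpl; field; contradict Hq; rewrite <- Hq; ring.
Qed.

Lemma mmul_minv_r (q : M2) : mdet q <> 0 -> mmul q (minv q) = mone.
Proof.
  destruct q as [q0 q1 q2 q3]; unfold minv, mscal, mdet; simpl; intro Hq.
  apply M2_ext; simpl; field; contradict Hq; rewrite <- Hq; ring.
Qed.

Lemma minv_unit (q : M2) : mdet q = 1 -> minv q = mkM2 (c0 q) (- cx q) (- cy q) (- cz q).
Proof. intro Hq; unfold minv; rewrite Hq; destruct q; apply M2_ext; simpl; field. Qed.

Lemma mmul_cancel_l (h x y : M2) : mdet h <> 0 -> mmul h x = mmul h y -> x = y.
Proof.
  intros Hh Hxy.
  rewrite <- (mmul_1_l x), <- (mmul_1_l y), <- (mmul_minv_l h Hh), <- !mmul_assoc, Hxy.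
  reflexivity.
Qed.

Lemma conj_mul (g x y : M2) : mdet g <> 0 -> conj g (mmul x y) = mmul (conj g x) (conj g y).
Proof.
  destruct g as [g0 g1 g2 g3], x, y; unfold conj, minv, mscal, mdet; simpl; intro Hg.
  apply M2_ext; simpl; field; contradict Hg; rewrite <- Hg; ring.
Qed.

Lemma conj_opp (g x : M2) : conj g (mopp x) = mopp (conj g x).
Proof. destruct g, x; apply M2_ext; simpl; ring. Qed.

Lemma conj_c0 (g x : M2) : mdet g <> 0 -> c0 (conj g x) = c0 x.
Proof.
  destruct g as [g0 g1 g2 g3], x; unfold conj, minv, mscal, mdet; simpl; intro Hg.
  field; contradict Hg; rewrite <- Hg; ring.
Qed.

Definition anticommuting (t : tuple4) : Prop :=
  let '(A, _, a, b) := t in mmul A a = mopp (mmul b A).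

Definition real_parts (t : tuple4) : R * R * R :=
  let '(A, B, a, b) := t in (c0 A, c0 B, c0 (mmul a b)).

Lemma Req_anticommuting (t u : tuple4) : Req t u -> anticommuting t -> anticommuting u.
Proof.
  destruct t as [[[A B] a] b], u as [[[A' B'] a'] b'].
  intros (g & Hg & <- & _ & <- & <-) Hrel; unfold anticommuting in *.
  assert (Hg0 : mdet g <> 0) by (unfold inSU2 in Hg; lra).
  rewrite <- !conj_mul, Hrel, conj_opp by exact Hg0; reflexivity.
Qed.

Lemma Req_real_parts (t u : tuple4) : Req t u -> real_parts t = real_parts u.
Proof.
  destruct t as [[[A B] a] b], u as [[[A' B'] a'] b'].
  intros (g & Hg & <- & <- & <- & <-); unfold real_parts.
  assert (Hg0 : mdet g <> 0) by (unfold inSU2 in Hg; lra).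
  rewrite <- conj_mul, !conj_c0 by exact Hg0; reflexivity.
Qed.

Lemma mdet_A0 (chi : R) : mdet (A0 chi) = 1.
Proof. unfold mdet; simpl. pose proof (sin2_cos2 chi). unfold Rsqr in *. nra. Qed.

Lemma mdet_a0 (psi : R) : mdet (a0 psi) = 1.
Proof. unfold mdet; simpl. pose proof (sin2_cos2 psi). unfold Rsqr in *. nra. Qed.

(* a0 is a purely imaginary unit quaternion, hence squares to -1. *)
Lemma minv_a0 (psi : R) : minv (a0 psi) = mopp (a0 psi).
Proof. rewrite (minv_unit _ (mdet_a0 psi)); apply M2_ext; simpl; ring. Qed.

Lemma mpow_A0 (chi : R) (n : nat) :
  mpow (A0 chi) n = mkM2 (cos (INR n * chi)) 0 0 (sin (INR n * chi)).
Proof.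
  induction n as [|n IH].
  - simpl; rewrite Rmult_0_l, cos_0, sin_0; reflexivity.
  - simpl mpow; rewrite IH, S_INR.
    replace ((INR n + 1) * chi) with (chi + INR n * chi) by ring.
    rewrite cos_plus, sin_plus; apply M2_ext; simpl; ring.
Qed.

(* On Q_p: A a = a0 A0 = - a0^-1 A0 = - b A. *)
Lemma Qp_anticommuting (p : nat) (chi psi : R) : anticommuting (Qp p chi psi).
Proof.
  unfold anticommuting, Qp.
  assert (HA0 : mdet (A0 chi) <> 0) by (rewrite mdet_A0; lra).
  rewrite !mmul_assoc, (mmul_minv_r _ HA0), mmul_1_l, minv_a0.
  destruct (a0 psi), (A0 chi); apply M2_ext; simpl; ring.
Qed.

(* Real parts on Q_p; by cyclicity the real part of B is that of a0 A0^p. *)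
Lemma Qp_real_parts (p : nat) (chi psi : R) :
  real_parts (Qp p chi psi) =
  (cos chi, - (sin (INR p * chi) * sin psi), 1 - 2 * sin chi ^ 2 * cos psi ^ 2).
Proof.
  unfold real_parts, Qp.
  rewrite Nat.add_1_r, (minv_unit _ (mdet_A0 chi)), minv_a0, mpow_A0, S_INR.
  replace ((INR p + 1) * chi) with (chi + INR p * chi) by ring.
  rewrite cos_plus, sin_plus.
  assert (Hchi : cos chi ^ 2 = 1 - sin chi ^ 2)
    by (pose proof (sin2_cos2 chi); unfold Rsqr in *; lra).
  assert (Hpsi : sin psi ^ 2 = 1 - cos psi ^ 2)
    by (pose proof (sin2_cos2 psi); unfold Rsqr in *; lra).
  f_equal; [f_equal|]; simpl; ring_simplify.
  - reflexivity.
  - rewrite Hchi; ring.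
  - rewrite Hchi, Hpsi; ring.
Qed.

Definition Lk (nu theta : R) : R := / sqrt (cos nu ^ 2 + sin nu ^ 2 * sin theta ^ 2).

Definition Lh (nu theta : R) : M2 :=
  mscal (Lk nu theta) (madd (mscal (cos nu) isx) (mscal (- (sin nu * sin theta)) isz)).

Lemma Ls_unfold (eps phi theta : R) :
  Ls eps phi theta =
  (mmul (Lh (eps * sin phi) theta)
        (madd (mscal (cos phi) mone)
              (mscal (sin phi) (madd (mscal (cos theta) isx) (mscal (sin theta) isy)))),
   madd (mscal (cos (eps * sin phi)) mone)
        (mscal (sin (eps * sin phi)) (madd (mscal (cos theta) isx) (mscal (sin theta) isy))),
   isz,
   mopp (conj (Lh (eps * sin phi) theta) (minv isz))).
Proof. reflexivity. Qed.

Lemma Lk_normalizes (nu theta : R) :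
  0 < cos nu -> Lk nu theta ^ 2 * (cos nu ^ 2 + sin nu ^ 2 * sin theta ^ 2) = 1.
Proof.
  intro Hc; unfold Lk.
  assert (HD : 0 < cos nu ^ 2 + sin nu ^ 2 * sin theta ^ 2) by nra.
  rewrite pow_inv, <- Rsqr_pow2, Rsqr_sqrt by lra.
  apply Rinv_l; lra.
Qed.

Lemma mdet_Lh (nu theta : R) : 0 < cos nu -> mdet (Lh nu theta) = 1.
Proof.
  intro Hc; rewrite <- (Lk_normalizes nu theta Hc); unfold mdet; simpl; ring.
Qed.

Lemma mopp_mmul_mopp (x y : M2) : mopp (mmul (mopp x) y) = mmul x y.
Proof. destruct x, y; apply M2_ext; simpl; ring. Qed.

Lemma anticommuting_conj_cancel (h w x : M2) :
  mdet h <> 0 ->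
  mmul (mmul h w) x = mopp (mmul (mopp (conj h (minv x))) (mmul h w)) ->
  mmul w x = mmul (minv x) w.
Proof.
  intros Hh Hrel; apply (mmul_cancel_l h); [exact Hh|].
  rewrite mmul_assoc, Hrel, mopp_mmul_mopp; unfold conj.
  rewrite <- !mmul_assoc, (mmul_assoc (minv h) h w), (mmul_minv_l h Hh), mmul_1_l.
  reflexivity.
Qed.

Lemma Ls_anticommuting_cos_phi (eps phi theta : R) :
  0 < cos (eps * sin phi) -> anticommuting (Ls eps phi theta) -> cos phi = 0.
Proof.
  intros Hc Hrel; rewrite Ls_unfold in Hrel; unfold anticommuting in Hrel.
  apply anticommuting_conj_cancel in Hrel; [|rewrite mdet_Lh; lra].
  apply (f_equal cz) in Hrel.
  rewrite (minv_unit isz) in Hrel by (unfold mdet; simpl; ring).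
  simpl in Hrel; lra.
Qed.

Lemma c0_isz_conj (h : M2) :
  mdet h = 1 ->
  c0 (mmul isz (mopp (conj h (minv isz)))) = cx h ^ 2 + cy h ^ 2 - c0 h ^ 2 - cz h ^ 2.
Proof.
  intro Hh; unfold conj; rewrite (minv_unit h Hh), (minv_unit isz) by (unfold mdet; simpl; ring).
  unfold mdet in Hh; destruct h; simpl in *. nra.
Qed.

Lemma Ls_real_parts_equator (eps theta : R) :
  0 < cos eps ->
  real_parts (Ls eps (PI / 2) theta) =
  (- (Lk eps theta * cos eps * cos theta), cos eps,
   Lk eps theta ^ 2 * (cos eps ^ 2 - sin eps ^ 2 * sin theta ^ 2)).
Proof.
  intro Hc; rewrite Ls_unfold; unfold real_parts.
  rewrite sin_PI2, cos_PI2, Rmult_1_r, c0_isz_conj by (apply mdet_Lh; exact Hc).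
  unfold Lh; f_equal; [f_equal|]; simpl; ring.
Qed.

Lemma sin_mult_zero (x : R) (n : nat) : sin x = 0 -> sin (INR n * x) = 0.
Proof.
  intro Hx; induction n as [|n IH].
  - rewrite Rmult_0_l; apply sin_0.
  - rewrite S_INR; replace ((INR n + 1) * x) with (INR n * x + x) by ring.
    rewrite sin_plus, IH, Hx; ring.
Qed.

Lemma cos_nat_PI (n : nat) : cos (INR n * PI) = (-1) ^ n.
Proof.
  induction n as [|n IH].
  - rewrite Rmult_0_l; apply cos_0.
  - rewrite S_INR; replace ((INR n + 1) * PI) with (INR n * PI + PI) by ring.
    rewrite neg_cos, IH; simpl; ring.
Qed.

(* Eliminating theta and k from the first and third trace equations:
   both sides give sin^2 chi = k^2 sin^2 theta, whence cos^2 psi = s^2. *)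
Lemma cos_psi_sq (chi psi theta k c s : R) :
  c ^ 2 + s ^ 2 = 1 ->
  k ^ 2 * (c ^ 2 + s ^ 2 * sin theta ^ 2) = 1 ->
  cos chi = - (k * c * cos theta) ->
  1 - 2 * sin chi ^ 2 * cos psi ^ 2 = k ^ 2 * (c ^ 2 - s ^ 2 * sin theta ^ 2) ->
  sin chi <> 0 -> cos psi ^ 2 = s ^ 2.
Proof.
  intros Hcs Hk Hcos Hab Hsin.
  pose proof (sin2_cos2 chi) as Hchi; pose proof (sin2_cos2 theta) as Htheta.
  unfold Rsqr in *.
  assert (Hsin2 : sin chi ^ 2 = k ^ 2 * sin theta ^ 2).
  { replace (sin chi ^ 2) with (1 - cos chi ^ 2) by lra; rewrite Hcos; nra. }
  assert (Hfactor : sin chi ^ 2 * (cos psi ^ 2 - s ^ 2) = 0) by nra.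
  apply Rmult_integral in Hfactor as [Hzero | Hdone]; [|lra].
  exfalso; exact (pow_nonzero _ 2 Hsin Hzero).
Qed.

Lemma cos_mult_zero_solutions (p : nat) (chi : R) :
  (0 < p)%nat -> 0 <= chi <= PI -> cos (INR p * chi) = 0 ->
  exists n : nat, (n < p)%nat /\
    chi = (INR n + 1 / 2) * (PI / INR p) /\ sin (INR p * chi) = (-1) ^ n.
Proof.
  intros Hp Hchi Hcos.
  destruct (cos_eq_0_0 _ Hcos) as [z Hz].
  assert (Hp0 : 0 < INR p) by (apply lt_0_INR; exact Hp).
  pose proof PI_RGT_0 as HPI.
  assert (Hz0 : (0 <= z)%Z).
  { assert (Hgt : -1 < IZR z) by nra. apply lt_IZR in Hgt; lia. }
  assert (Hzp : (z < Z.of_nat p)%Z).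
  { apply lt_IZR; rewrite <- INR_IZR_INZ; nra. }
  assert (Hn : INR (Z.to_nat z) = IZR z) by (rewrite INR_IZR_INZ, Z2Nat.id by lia; reflexivity).
  exists (Z.to_nat z); split; [lia|split].
  - rewrite Hn; apply (Rmult_eq_reg_l (INR p)); [|lra].
    rewrite Hz; field; lra.
  - rewrite Hz, sin_plus, cos_PI2, sin_PI2, <- Hn, cos_nat_PI; ring.
Qed.

Lemma psi_from_cos_and_sign (psi eps : R) (n : nat) :
  0 < eps < PI / 2 -> - (PI / 2) <= psi <= PI / 2 ->
  cos psi = sin eps -> (-1) ^ n * sin psi < 0 ->
  psi = (-1) ^ (n + 1) * (PI / 2 - eps).
Proof.
  intros Heps Hpsi Hcos Hsign.
  assert (Hshift : cos (PI / 2 - eps) = sin eps) by apply cos_shift.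
  rewrite pow_add; simpl (pow (-1) 1).
  destruct (Nat.Even_or_Odd n) as [[m ->] | [m ->]].
  - rewrite pow_1_even in *.
    assert (Hneg : psi < 0).
    { destruct (Rlt_or_le psi 0) as [|Hge]; [assumption|].
      assert (0 <= sin psi) by (apply sin_ge_0; lra). lra. }
    assert (- psi = PI / 2 - eps) by (apply cos_inj; try lra; rewrite cos_neg; lra).
    lra.
  - replace (2 * m + 1)%nat with (S (2 * m)) in * by lia.
    rewrite pow_1_odd in *.
    assert (Hpos : 0 < psi).
    { destruct (Rlt_or_le 0 psi) as [|Hle]; [assumption|].
      assert (0 <= sin (- psi)) by (apply sin_ge_0; lra). rewrite sin_neg in *; lra. }
    assert (psi = PI / 2 - eps) by (apply cos_inj; lra).
    lra.
Qed.

(* The second trace equation together with cos psi = sin eps: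
   sin^2 psi = cos^2 eps forces sin^2 (p chi) = 1. *)
Lemma equator_solutions (p : nat) (eps chi psi : R) :
  (0 < p)%nat -> 0 < eps < PI / 2 -> 0 <= chi <= PI -> - (PI / 2) <= psi <= PI / 2 ->
  cos psi = sin eps -> - (sin (INR p * chi) * sin psi) = cos eps ->
  exists n : nat, (n < p)%nat /\
    chi = (INR n + 1 / 2) * (PI / INR p) /\
    psi = (-1) ^ (n + 1) * (PI / 2 - eps).
Proof.
  intros Hp Heps Hchi Hpsi Hcos HB.
  assert (Hc : 0 < cos eps) by (apply cos_gt_0; lra).
  pose proof (sin2_cos2 psi) as Hpsi2; pose proof (sin2_cos2 eps) as Heps2.
  pose proof (sin2_cos2 (INR p * chi)) as Hpchi2; unfold Rsqr in *.
  assert (Hsin_psi : sin psi ^ 2 = cos eps ^ 2) by (rewrite Hcos in Hpsi2; lra).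
  assert (Hsin_pchi : sin (INR p * chi) ^ 2 = 1).
  { assert (Hsq : (sin (INR p * chi) ^ 2 - 1) * cos eps ^ 2 = 0).
    { replace ((sin (INR p * chi) ^ 2 - 1) * cos eps ^ 2)
        with ((- (sin (INR p * chi) * sin psi)) ^ 2 - cos eps ^ 2
              + sin (INR p * chi) ^ 2 * (cos eps ^ 2 - sin psi ^ 2)) by ring.
      rewrite HB, Hsin_psi; ring. }
    apply Rmult_integral in Hsq as [|Hzero]; [lra|].
    exfalso; exact (pow_nonzero _ 2 (Rgt_not_eq _ _ Hc) Hzero). }
  assert (Hcos_pchi : cos (INR p * chi) = 0)
    by (apply Rsqr_0_uniq; unfold Rsqr; lra).
  destruct (cos_mult_zero_solutions p chi Hp Hchi Hcos_pchi) as (n & Hn & Hchin & Hsign).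
  exists n; split; [exact Hn | split; [exact Hchin |]].
  apply psi_from_cos_and_sign; [lra | lra | exact Hcos |].
  rewrite <- Hsign; lra.
Qed.

Theorem lemma5p5 :
  forall p : nat, (2 <= p)%nat ->
  exists eps0 : R, 0 < eps0 /\
  forall eps : R, 0 < eps < eps0 ->
  forall chi psi : R, 0 <= chi <= PI -> - (PI / 2) <= psi <= PI / 2 ->
  forall phi theta : R, 0 <= phi <= PI ->
  Req (Qp p chi psi) (Ls eps phi theta) ->
  phi = PI / 2 /\
  exists n : nat, (n < p)%nat /\
    chi = (INR n + 1 / 2) * (PI / INR p) /\
    psi = (-1) ^ (n + 1) * (PI / 2 - eps).
Proof.
  intros p Hp; exists 1; split; [lra|].
  intros eps Heps chi psi Hchi Hpsi phi theta Hphi HQL.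
  pose proof PI2_1 as HPI2.
  assert (Hsin_phi : 0 <= sin phi <= 1) by (split; [apply sin_ge_0 | apply SIN_bound]; lra).
  assert (Hphi2 : phi = PI / 2).
  { apply cos_inj; [lra | lra | rewrite cos_PI2].
    apply (Ls_anticommuting_cos_phi eps phi theta); [apply cos_gt_0; nra |].
    exact (Req_anticommuting _ _ HQL (Qp_anticommuting p chi psi)). }
  subst phi; split; [reflexivity|].
  assert (Hc : 0 < cos eps) by (apply cos_gt_0; lra).
  pose proof (Req_real_parts _ _ HQL) as Htraces.
  rewrite Qp_real_parts, Ls_real_parts_equator in Htraces by exact Hc.
  injection Htraces as HA HB Hab.
  assert (Hsin_chi : sin chi <> 0).
  { intro Hzero; rewrite (sin_mult_zero chi p Hzero) in HB; lra. }
  assert (Hcos_psi : cos psi = sin eps).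
  { pose proof (sin2_cos2 eps) as Heps2; unfold Rsqr in Heps2.
    pose proof (cos_psi_sq chi psi theta (Lk eps theta) (cos eps) (sin eps)
                  ltac:(lra) (Lk_normalizes eps theta Hc) HA Hab Hsin_chi).
    assert (0 <= cos psi) by (apply cos_ge_0; lra).
    assert (0 < sin eps) by (apply sin_gt_0; lra).
    nra. }
  apply equator_solutions; [lia | lra | exact Hchi | exact Hpsi | exact Hcos_psi | exact HB].
Qed.
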